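(* Let $\Delta$ be a complete unimodular fan in $N_\mathbb R$, $\Sigma$ a tropical cycle in $N_\mathbb R$ compatible with $\Delta$, and $\tau\in\Delta$. Then $\rho(\overline\Sigma\cap O(\tau))=\overline{\rho(\Sigma)}\cap O(\tau)$ as tropical cycles in $O(\tau)$.
   Context: $N_\mathbb R(\Delta)=\bigsqcup_{\tau\in\Delta}O(\tau)$, $O(\tau)=N_\mathbb R/\mathbb R\tau$, closures taken in $N_\mathbb R(\Delta)$; for $\Sigma$ compatible with $\Delta$ (for each polyhedron $P$ of $\Sigma$ and $\sigma\in\Delta$, either $\sigma\subseteq\rho(P)$ or $\mathrm{relint}(\sigma)\cap\rho(P)=\emptyset$, $\rho$ = recession cone), $\overline\Sigma\cap O(\tau)=\bigcup_{\tau\subseteq\rho(\sigma)}\pi_\tau(\sigma)$ is a tropical cycle with the weights of the corresponding faces of $\Sigma$. The recession fan $\rho(\Sigma)$ of a tropical cycle $\Sigma$ (with a polyhedral structure such that each $\rho(\sigma)$ is a cone of a fan) is the fan of the cones $\rho(\sigma)$, where a maximal cone $\tau'$ gets weight $m(\tau')=\sum_{\sigma\in\Sigma,\rho(\sigma)=\tau'}m(\sigma)$; this is a balanced fan. *)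

From mathcomp Require Import all_boot all_order all_algebra.
From mathcomp Require Import boolp classical_sets reals.

Set Implicit Arguments.
Unset Strict Implicit.
Unset Printing Implicit Defensive.

Import Order.TTheory GRing.Theory Num.Theory.
Local Open Scope ring_scope.
Local Open Scope classical_set_scope.

Section TropicalDefs.
Variable R : realType.

(* N_R = R^n as row vectors, N = Z^n the integral points. *)
Definition isint (x : R) := exists z : int, x = z%:~R.
Definition intv n (v : 'rV[R]_n) := forall i, isint (v 0 i).
Definition dotv n (u v : 'rV[R]_n) : R := \sum_i u 0 i * v 0 i.

Definition polyhedron n (P : set 'rV[R]_n) :=
  exists k (A : 'M[R]_(k, n)) (b : 'rV[R]_k),
    (forall i j, isint (A i j)) /\
    P = [set x | forall i, dotv (row i A) x <= b 0 i].

Definition polycone n (P : set 'rV[R]_n) :=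
  exists k (A : 'M[R]_(k, n)),
    (forall i j, isint (A i j)) /\
    P = [set x | forall i, dotv (row i A) x <= 0].

Definition face n (F P : set 'rV[R]_n) :=
  F !=set0 /\
  exists (a : 'rV[R]_n) (b : R),
    (forall x, P x -> dotv a x <= b) /\ F = P `&` [set x | dotv a x = b].

Definition lspan n (S : set 'rV[R]_n) : set 'rV[R]_n :=
  [set v | exists k (c : 'I_k -> R) (x : 'I_k -> 'rV[R]_n),
             (forall i, S (x i)) /\ v = \sum_i c i *: x i].
Definition Lsp n (P : set 'rV[R]_n) := lspan [set x - y | x in P & y in P].

(* pdim P d : the polyhedron P has dimension d (dim of L_P is d) *)
Definition pdim n (P : set 'rV[R]_n) (d : nat) :=
  (exists X : 'M[R]_(d, n), (forall i, Lsp P (row i X)) /\ row_free X) /\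
  (forall X : 'M[R]_(d.+1, n), (forall i, Lsp P (row i X)) -> ~~ row_free X).

(* relative interior (algebraic form, for convex sets in finite dimension) *)
Definition relint n (P : set 'rV[R]_n) : set 'rV[R]_n :=
  [set x | P x /\ forall v, Lsp P v -> exists2 e : R, 0 < e & P (x + e *: v)].

Definition rec_cone n (P : set 'rV[R]_n) : set 'rV[R]_n :=
  [set v | forall x, P x -> forall t : R, 0 <= t -> P (x + t *: v)].

Definition polycomplex n k (C : 'I_k -> set 'rV[R]_n) :=
  injective C /\
  (forall i, polyhedron (C i) /\ C i !=set0) /\
  (forall i F, face F (C i) -> exists j, C j = F) /\
  (forall i j, C i `&` C j !=set0 ->
     face (C i `&` C j) (C i) /\ face (C i `&` C j) (C j)).

Definition pure n k (C : 'I_k -> set 'rV[R]_n) (d : nat) :=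
  forall i, exists j, C i `<=` C j /\ pdim (C j) d.

(* v is a lattice representative of the primitive normal vector u_{sigma/tau} *)
Definition primitive_normal n (tau sigma : set 'rV[R]_n) (v : 'rV[R]_n) :=
  intv v /\ Lsp sigma v /\
  (exists x, tau x /\ exists2 e : R, 0 < e & sigma (x + e *: v)) /\
  (forall w, intv w -> Lsp sigma w -> exists c : int, Lsp tau (w - v *~ c)).

Definition balanced n k (C : 'I_k -> set 'rV[R]_n) (m : 'I_k -> int) (d : nat) :=
  (0 < d)%N ->
  forall t, pdim (C t) d.-1 ->
  exists v : 'I_k -> 'rV[R]_n,
    (forall s, (pdim (C s) d /\ C t `<=` C s) -> primitive_normal (C t) (C s) (v s)) /\
    (forall s, ~ (pdim (C s) d /\ C t `<=` C s) -> v s = 0) /\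
    Lsp (C t) (\sum_s v s *~ m s).

Definition tropical_cycle n k (d : nat) (C : 'I_k -> set 'rV[R]_n) (m : 'I_k -> int) :=
  polycomplex C /\ pure C d /\ (forall i, pdim (C i) d -> m i != 0) /\ balanced C m d.

Definition unimodular_cone n (P : set 'rV[R]_n) :=
  exists (B : 'M[R]_n) (S : pred 'I_n),
    (forall i j, isint (B i j)) /\ (\det B = 1 \/ \det B = -1) /\
    P = [set x | exists c : 'I_n -> R, (forall i, 0 <= c i) /\
                   (forall i, ~~ S i -> c i = 0) /\ x = \sum_i c i *: row i B].

Definition fan n l (D : 'I_l -> set 'rV[R]_n) :=
  polycomplex D /\ forall i, polycone (D i).
Definition complete_fan n l (D : 'I_l -> set 'rV[R]_n) :=
  fan D /\ forall x, exists i, D i x.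
Definition unimodular_fan n l (D : 'I_l -> set 'rV[R]_n) :=
  fan D /\ forall i, unimodular_cone (D i).

Definition compatible n k l (C : 'I_k -> set 'rV[R]_n) (D : 'I_l -> set 'rV[R]_n) :=
  forall i j, D j `<=` rec_cone (C i) \/ relint (D j) `&` rec_cone (C i) = set0.

(* O(tau) = N_R / R tau with lattice N / (N cap R tau), presented as R^p via
   the linear map x |-> x *m M *)
Definition quotient_presentation n p (tau : set 'rV[R]_n) (M : 'M[R]_(n, p)) :=
  (forall i j, isint (M i j)) /\
  (forall x, x *m M = 0 <-> Lsp tau x) /\
  (forall y, intv y -> exists x, intv x /\ x *m M = y).

Definition proj n p (M : 'M[R]_(n, p)) (P : set 'rV[R]_n) : set 'rV[R]_p :=
  [set x *m M | x in P].

(* closure in N_R(Delta) intersected with O(tau): cells pi_tau(sigma) for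
   tau in rho(sigma), with the weight of sigma (other cells get weight 0) *)
Definition orbit_cells n p k (M : 'M[R]_(n, p)) (C : 'I_k -> set 'rV[R]_n) :=
  fun i => proj M (C i).
Definition orbit_weights n k (tau : set 'rV[R]_n) (C : 'I_k -> set 'rV[R]_n)
  (w : 'I_k -> int) : 'I_k -> int :=
  fun i => if `[< tau `<=` rec_cone (C i) >] then w i else 0.

(* recession fan of a cycle of dimension e: cones rho(sigma); a maximal cone
   gets the sum of the weights of the e-cells sigma with rho(sigma) = cone *)
Definition recfan_cells n k (C : 'I_k -> set 'rV[R]_n) := fun i => rec_cone (C i).
Definition recfan_weights n k (e : nat) (C : 'I_k -> set 'rV[R]_n)
  (w : 'I_k -> int) : 'I_k -> int :=
  fun i => if `[< pdim (C i) e >] then w i else 0.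

Definition wfun n k (Q : 'I_k -> set 'rV[R]_n) (w : 'I_k -> int) (e : nat)
  (y : 'rV[R]_n) : int :=
  \sum_(i < k) (if `[< pdim (Q i) e /\ Q i y >] then w i else 0).

(* equality of e-dimensional tropical cycles (i.e. up to refinement):
   the weight functions agree outside finitely many polyhedra of dim < e *)
Definition cycle_eq n (e : nat) k1 (Q1 : 'I_k1 -> set 'rV[R]_n) (w1 : 'I_k1 -> int)
  k2 (Q2 : 'I_k2 -> set 'rV[R]_n) (w2 : 'I_k2 -> int) :=
  exists q (Z : 'I_q -> set 'rV[R]_n),
    (forall j, polyhedron (Z j) /\ exists e', pdim (Z j) e' /\ (e' < e)%N) /\
    (forall y, (forall j, ~ Z j y) -> wfun Q1 w1 e y = wfun Q2 w2 e y).

End TropicalDefs.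

From mathcomp Require Import all_boot all_order all_algebra.
From mathcomp Require Import boolp classical_sets reals.
From mathcomp Require Import ring lra zify.

(* The two cycles agree cell by cell; the condition tau <= rho(sigma) selecting
   the cells is the same on both sides since rho(rho(sigma)) = rho(sigma).
   Fix a cell sigma with tau inside its recession cone and let pi be the projection killing the span of tau.
   Projection commutes with taking recession cones: a point z in the relative
   interior of tau absorbs the kernel of pi, in the sense that every kernel
   vector differs from a multiple of z by a point of tau, hence of rho(sigma);
   so a recession direction of pi(sigma) lifts to one of sigma after adding a
   large multiple of z.  Moreover the span of tau lies in the linear space of
   sigma, so dim pi(sigma) = dim sigma - dim tau, and pi(sigma) has dimension
   d - dim tau exactly when sigma is a top-dimensional cell. *)

Set Implicit Arguments.
Unset Strict Implicit.
Unset Printing Implicit Defensive.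
Import Order.TTheory GRing.Theory Num.Theory.
Local Open Scope ring_scope.
Local Open Scope classical_set_scope.

Section LinearSpans.
Variables (R : realType) (n : nat).
Implicit Types (S P Q tau : set 'rV[R]_n).

Lemma sub_lspan S : S `<=` lspan S.
Proof.
move=> x Sx; exists 1%N, (fun=> 1), (fun=> x); split => //.
by rewrite big_ord1 scale1r.
Qed.

Lemma lspan_ind S (W : set 'rV[R]_n) : W 0 ->
  (forall x y, W x -> W y -> W (x + y)) -> (forall c x, W x -> W (c *: x)) ->
  S `<=` W -> lspan S `<=` W.
Proof.
move=> W0 WD WZ SW _ [k [c [xs [Sxs ->]]]].
by apply: (big_ind W) => // i _; apply/WZ/SW.
Qed.

Lemma lspan_submx S r (Y : 'M[R]_(r, n)) :
  (forall x, S x -> (x <= Y)%MS) -> forall x, lspan S x -> (x <= Y)%MS.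
Proof.
move=> SY x [k [c [xs [Sxs ->]]]].
by apply: summx_sub => i _; apply/scalemx_sub/SY.
Qed.

Lemma submx_lspan S r (Y : 'M[R]_(r, n)) :
  (forall i, S (row i Y)) -> forall x, (x <= Y)%MS -> lspan S x.
Proof.
move=> SY x xY; exists r, (fun i => (x *m pinvmx Y) 0 i), (fun i => row i Y).
by split => //; rewrite -mulmx_sum_row mulmxKpV.
Qed.

Lemma row_free_col_mx r (s : 'rV[R]_n) (X : 'M[R]_(r, n)) :
  row_free X -> ~~ (s <= X)%MS -> row_free (col_mx s X).
Proof.
move=> /eqP rkX sX; rewrite /row_free -addsmxE.
have ltX : (X < s + X)%MS.
  rewrite ltmxE addsmxSr /=; apply: contra sX => sXX.
  exact: submx_trans (addsmxSl _ _) sXX.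
have := rank_ltmx ltX; have := (mxrank_adds_leqif s X).1.
have := rank_leq_row s; rewrite rkX; lia.
Qed.

(* A maximal family of linearly independent vectors of S spans lspan S. *)
Lemma lspan_rowspace S : exists r (Y : 'M[R]_(r, n)), forall x, lspan S x <-> (x <= Y)%MS.
Proof.
pose free_in r := `[< exists X : 'M[R]_(r, n), (forall i, S (row i X)) /\ row_free X >].
have free0 : exists r, free_in r.
  by exists 0%N; apply/asboolP; exists 0; split; [case | rewrite /row_free mxrank0].
have free_le r : free_in r -> (r <= n)%N.
  by move=> /asboolP [X [_ /eqP <-]]; exact: rank_leq_col.
have [r /asboolP [X [SX freeX]] rmax] := ex_maxnP free0 free_le.
have SsubX s : S s -> (s <= X)%MS.
  move=> Ss; apply/negPn/negP => sX.
  suff /rmax : free_in r.+1 by rewrite ltnn.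
  apply/asboolP; exists (col_mx s X); split; last exact: row_free_col_mx.
  move=> i; rewrite -(splitK (i : 'I_(1 + r))); case: (split _) => j /=.
    by rewrite -[row _ _]/(row (lshift r j) (col_mx s X)) rowKu row_id.
  by rewrite -[row _ _]/(row (rshift 1 j) (col_mx s X)) rowKd.
by exists r, X => x; split; [exact: lspan_submx | exact: submx_lspan].
Qed.

Lemma Lsp_mono P Q : P `<=` Q -> Lsp P `<=` Lsp Q.
Proof.
move=> PQ _ [k [c [xs [Pxs ->]]]]; exists k, c, xs; split => // i.
by have [a Pa [b Pb <-]] := Pxs i; exists a; [exact: PQ | exists b => //; exact: PQ].
Qed.

Lemma pdim_rank P d r (Y : 'M[R]_(r, n)) :
  (forall x, Lsp P x <-> (x <= Y)%MS) -> pdim P d <-> d = \rank Y.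
Proof.
move=> LY; have rowsY k (X : 'M[R]_(k, n)) : (forall i, Lsp P (row i X)) -> (X <= Y)%MS.
  by move=> LX; apply/row_subP => i; apply/LY.
split => [[[X [LX /eqP rkX]] maxd] | ->].
  have XY := rowsY _ X LX; have := mxrankS XY; rewrite rkX leq_eqVlt => /orP[/eqP //|ltY].
  have [i iX] : exists i, ~~ (row i Y <= X)%MS.
    apply: contrapT => allX; have /mxrankS : (Y <= X)%MS.
      by apply/row_subP => i; apply/negPn/negP => iX; apply: allX; exists i.
    by rewrite rkX leqNgt ltY.
  have rowsYiX j : Lsp P (row j (col_mx (row i Y) X)).
    apply/LY; rewrite -(splitK (j : 'I_(1 + d))); case: (split _) => h /=.
      by rewrite -[row _ _]/(row (lshift d h) (col_mx (row i Y) X)) rowKu row_id row_sub.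
    rewrite -[row _ _]/(row (rshift 1 h) (col_mx (row i Y) X)) rowKd.
    exact: submx_trans (row_sub _ _) XY.
  by case/negP: (maxd _ rowsYiX); apply: row_free_col_mx => //; apply/eqP.
split.
  exists (row_base Y); split; last exact: row_base_free.
  by move=> i; apply/LY; rewrite -(eq_row_base Y) row_sub.
move=> X LX; apply/negP => /eqP rkX.
by have := mxrankS (rowsY _ X LX); rewrite rkX ltnn.
Qed.

Lemma pdim_exists P : exists d, pdim P d.
Proof.
have [r [Y LY]] := lspan_rowspace [set x - y | x in P & y in P].
by exists (\rank Y); apply/(pdim_rank _ LY).
Qed.

Lemma pdim_eq P d : pdim P d -> forall d', pdim P d' <-> d' = d.
Proof.
have [r [Y LY]] := lspan_rowspace [set x - y | x in P & y in P].
by move=> /(pdim_rank _ LY) -> d'; apply: pdim_rank.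
Qed.

Lemma pdim_le P Q a b : P `<=` Q -> pdim P a -> pdim Q b -> (a <= b)%N.
Proof.
move=> PQ dimP dimQ.
have [r [X LX]] := lspan_rowspace [set x - y | x in P & y in P].
have [s [Y LY]] := lspan_rowspace [set x - y | x in Q & y in Q].
rewrite ((pdim_rank _ LX).1 dimP) ((pdim_rank _ LY).1 dimQ); apply: mxrankS.
by apply/row_subP => i; apply/LY/(Lsp_mono PQ)/LX; exact: row_sub.
Qed.

End LinearSpans.

Section Projection.
Variables (R : realType) (n p : nat) (M : 'M[R]_(n, p)).
Implicit Types (P tau : set 'rV[R]_n).

Lemma Lsp_proj P r (X : 'M[R]_(r, n)) :
  (forall x, Lsp P x <-> (x <= X)%MS) ->
  forall y, Lsp (proj M P) y <-> (y <= X *m M)%MS.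
Proof.
move=> LX y; split.
  move: y; apply: lspan_submx => _ [_ [a Pa <-] [_ [b Pb <-] <-]].
  by rewrite -mulmxBl; apply/submxMr/LX/sub_lspan; exists a => //; exists b.
move=> yXM; have /LX[k [c [xs [Pxs xsE]]]] : ((y *m pinvmx (X *m M)) *m X <= X)%MS.
  exact: submxMl.
exists k, c, (fun i => xs i *m M); split.
  move=> i; have [a Pa [b Pb <-]] := Pxs i.
  by exists (a *m M); [exists a | exists (b *m M); [exists b | rewrite mulmxBl]].
rewrite -(mulmxKpV yXM) mulmxA xsE mulmx_suml; apply: eq_bigr => i _.
by rewrite scalemxAl.
Qed.

Lemma pdim_proj tau P a b :
  (forall x, x *m M = 0 <-> Lsp tau x) -> Lsp tau `<=` Lsp P ->
  pdim P a -> pdim tau b -> (b <= a)%N /\ pdim (proj M P) (a - b).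
Proof.
move=> kerM tauP dimP dimtau.
have [r [X LX]] := lspan_rowspace [set x - y | x in P & y in P].
have Ltau x : Lsp tau x <-> (x <= kermx M)%MS.
  by rewrite sub_kermx; split => [/kerM -> // | /eqP /kerM].
rewrite ((pdim_rank _ LX).1 dimP) ((pdim_rank _ Ltau).1 dimtau).
have kerX : (kermx M <= X)%MS.
  by apply/row_subP => i; apply/LX/tauP/Ltau; exact: row_sub.
have := mxrank_mul_ker X M; rewrite (capmx_idPr kerX) => rkXM.
split; first exact: mxrankS.
by apply/(pdim_rank _ (Lsp_proj LX)); rewrite -rkXM addnK.
Qed.

End Projection.

Section Polyhedra.
Variables (R : realType) (n : nat).
Implicit Types (P tau : set 'rV[R]_n).

Lemma dotvD (a x y : 'rV[R]_n) : dotv a (x + y) = dotv a x + dotv a y.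
Proof. by rewrite /dotv -big_split; apply: eq_bigr => i _; rewrite mxE mulrDr. Qed.

Lemma dotvZ (a x : 'rV[R]_n) c : dotv a (c *: x) = c * dotv a x.
Proof. by rewrite /dotv mulr_sumr; apply: eq_bigr => i _; rewrite mxE mulrCA. Qed.

Lemma le0_of_ray_bounded (a b c : R) : (forall t, 0 <= t -> a + t * b <= c) -> b <= 0.
Proof.
move=> ray; rewrite leNgt; apply/negP => b_gt0.
have t_ge0 : 0 <= (`|c - a| + 1) / b by apply: divr_ge0; [apply: addr_ge0 | exact: ltW].
by have := ray _ t_ge0; rewrite divfK ?gt_eqF //; have := ler_norm (c - a); lra.
Qed.

Lemma exists_shift_le0 k (a c : 'I_k -> R) :
  (forall i, c i <= 0) -> (forall i, c i = 0 -> a i <= 0) ->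
  exists s, forall i, a i + s * c i <= 0.
Proof.
move=> c_le0 a_le0; exists (\sum_i `|a i / c i|) => i.
have := c_le0 i; rewrite le_eqVlt => /orP[/eqP ci0 | ci_lt0].
  by rewrite ci0 mulr0 addr0; apply: a_le0.
have le_sum : `|a i / c i| <= \sum_i `|a i / c i|.
  by rewrite (bigD1 i) //= lerDl sumr_ge0.
have aE : a i = a i / c i * c i by rewrite divfK ?lt_eqF.
have := ler_norm (- (a i / c i)); rewrite normrN.
move: le_sum aE ci_lt0; set q := a i / c i; set s := \sum_j _; nra.
Qed.

Definition hpoly k (A : 'M[R]_(k, n)) (b : 'rV[R]_k) : set 'rV[R]_n :=
  [set x | forall i, dotv (row i A) x <= b 0 i].

Lemma rec_cone_hpoly k (A : 'M[R]_(k, n)) b : hpoly A b !=set0 ->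
  rec_cone (hpoly A b) = [set w | forall i, dotv (row i A) w <= 0].
Proof.
move=> [x0 Px0]; apply/seteqP; split => w.
  move=> recw i; apply: (@le0_of_ray_bounded (dotv (row i A) x0) _ (b 0 i)) => t t0.
  by have := recw _ Px0 t t0 i; rewrite dotvD dotvZ.
move=> Aw x Px t t0 i; rewrite dotvD dotvZ.
by have := Px i; have := Aw i; nra.
Qed.

Lemma rec_cone_idem P : rec_cone (rec_cone P) = rec_cone P.
Proof.
apply/seteqP; split => v recv.
  have rec0 : rec_cone P 0 by move=> x Px t _; rewrite scaler0 addr0.
  by have := recv _ rec0 1 ler01; rewrite add0r scale1r.
move=> w recw t t0 x Px s s0.
by rewrite scalerDr addrA scalerA; apply: recv; [exact: recw | exact: mulr_ge0].
Qed.

Lemma Lsp_rec_cone P tau : P !=set0 -> tau `<=` rec_cone P -> Lsp tau `<=` Lsp P.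
Proof.
move=> [x0 Px0] tauP.
have [r [X LX]] := lspan_rowspace [set x - y | x in P & y in P].
have tauX a : tau a -> (a <= X)%MS.
  move=> taua; apply/LX/sub_lspan; exists (x0 + 1 *: a); first exact: tauP.
  by exists x0 => //; rewrite scale1r addrC addKr.
move=> x /(lspan_submx _) Lx; apply/LX/Lx => _ [a taua [b taub <-]].
by rewrite -scaleN1r; apply: addmx_sub (scalemx_sub _ (tauX _ taub)); apply: tauX.
Qed.

End Polyhedra.

Section Cones.
Variables (R : realType) (n : nat).
Implicit Types (P tau : set 'rV[R]_n).

Definition gen_cone q (g : 'I_q -> 'rV[R]_n) (S : pred 'I_q) : set 'rV[R]_n :=
  [set x | exists c : 'I_q -> R, (forall i, 0 <= c i) /\
     (forall i, ~~ S i -> c i = 0) /\ x = \sum_i c i *: g i].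

(* [z] absorbs the span of [tau]: a relative-interior point of a cone does. *)
Definition span_absorbing tau (z : 'rV[R]_n) :=
  [/\ tau z, Lsp tau z & forall k, Lsp tau k -> exists s, tau (s *: z - k)].

Section GeneratedCone.
Variables (q : nat) (g : 'I_q -> 'rV[R]_n) (S : pred 'I_q).

Lemma Lsp_gen_cone x : Lsp (gen_cone g S) x ->
  exists c : 'I_q -> R, (forall i, ~~ S i -> c i = 0) /\ x = \sum_i c i *: g i.
Proof.
move: x; apply: lspan_ind.
- by exists (fun=> 0); split => //; rewrite big1 // => i _; rewrite scale0r.
- move=> _ _ [c1 [c1S ->]] [c2 [c2S ->]]; exists (fun i => c1 i + c2 i); split.
    by move=> i Si; rewrite c1S // c2S // addr0.
  by rewrite -big_split; apply: eq_bigr => i _; rewrite scalerDl.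
- move=> a _ [c [cS ->]]; exists (fun i => a * c i); split.
    by move=> i Si; rewrite cS // mulr0.
  by rewrite scaler_sumr; apply: eq_bigr => i _; rewrite scalerA.
- move=> _ [_ [c1 [_ [c1S ->]]] [_ [c2 [_ [c2S ->]]] <-]].
  exists (fun i => c1 i - c2 i); split; first by move=> i Si; rewrite c1S // c2S // subrr.
  by rewrite -sumrB; apply: eq_bigr => i _; rewrite scalerBl.
Qed.

Lemma gen_cone_span_absorbing : exists z, span_absorbing (gen_cone g S) z.
Proof.
pose one_S i : R := if S i then 1 else 0.
have one_S_ge0 i : 0 <= one_S i by rewrite /one_S; case: (S i).
pose z := \sum_i one_S i *: g i.
have cone_z : gen_cone g S z.
  by exists one_S; split => //; split => // i /negbTE; rewrite /one_S => ->.
have cone0 : gen_cone g S 0.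
  by exists (fun=> 0); split => //; split => //; rewrite big1 // => i _; rewrite scale0r.
exists z; split => //; first by rewrite -[z]subr0; apply: sub_lspan; exists z => //; exists 0.
move=> _ /Lsp_gen_cone [a [aS ->]]; exists (\sum_i `|a i|).
exists (fun i => (\sum_j `|a j|) * one_S i - a i); split; last split.
- move=> i; rewrite /one_S; case: (boolP (S i)) => Si; last by rewrite aS // mulr0 subrr.
  rewrite mulr1 subr_ge0; apply: le_trans (ler_norm _) _.
  by rewrite (bigD1 i) //= lerDl sumr_ge0.
- by move=> i Si; rewrite /one_S (negbTE Si) aS // mulr0 subrr.
- by rewrite scaler_sumr -sumrB; apply: eq_bigr => i _; rewrite scalerA scalerBl.
Qed.

End GeneratedCone.

Lemma proj_rec_cone_sub p (M : 'M[R]_(n, p)) P :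
  proj M (rec_cone P) `<=` rec_cone (proj M P).
Proof.
move=> _ [w recw <-] _ [x Px <-] t t0; exists (x + t *: w); first exact: recw.
by rewrite mulmxDl scalemxAl.
Qed.

(* The converse needs polyhedrality: a lift of a recession direction of the
   projection is corrected by a large multiple of the absorbing point [z]. *)
Lemma rec_cone_proj p (M : 'M[R]_(n, p)) P tau z :
  polyhedron P -> P !=set0 -> tau `<=` rec_cone P ->
  (forall x, x *m M = 0 <-> Lsp tau x) -> span_absorbing tau z ->
  rec_cone (proj M P) = proj M (rec_cone P).
Proof.
move=> [k [A [b [_ ->]]]] P0 tau_rec kerM [tau_z Lz absorb].
apply/seteqP; split; last exact: proj_rec_cone_sub.
have [x0 Px0] := P0; move=> v recv.
have ray t : 0 <= t -> exists2 x, hpoly A b x & x *m M = x0 *m M + t *: v.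
  by move=> t0; have [x Px <-] := recv _ (ex_intro2 _ _ x0 Px0 erefl) t t0; exists x.
have [u uM] : exists u, u *m M = v.
  have [x1 _ x1M] := ray 1 ler01.
  by exists (x1 - x0); rewrite mulmxBl x1M scale1r addrC addKr.
have Az i : dotv (row i A) z <= 0 by move: (tau_rec _ tau_z); rewrite rec_cone_hpoly.
have Au i : dotv (row i A) z = 0 -> dotv (row i A) u <= 0.
  move=> Azi; apply: (le0_of_ray_bounded (a := dotv (row i A) x0) (c := b 0 i)) => t t0.
  have [xt Pxt xtM] := ray t t0.
  have /absorb[s tau_s] : Lsp tau (xt - x0 - t *: u).
    by apply/kerM; rewrite !mulmxBl xtM -scalemxAl uM addrAC addrK subrr.
  have := tau_rec _ tau_s _ Pxt 1 ler01 i.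
  have -> : xt + 1 *: (s *: z - (xt - x0 - t *: u)) = x0 + t *: u + s *: z.
    by apply/rowP => j; rewrite !mxE; ring.
  by rewrite !dotvD !dotvZ Azi mulr0 addr0.
have [s Hs] := exists_shift_le0 Az Au.
exists (u + s *: z); first by rewrite rec_cone_hpoly // => i; rewrite dotvD dotvZ.
by rewrite mulmxDl -scalemxAl (proj2 (kerM z) Lz) scaler0 addr0.
Qed.

End Cones.

Theorem lemma3 (R : realType) (n : nat)
  (l : nat) (D : 'I_l -> set 'rV[R]_n)
  (d k : nat) (C : 'I_k -> set 'rV[R]_n) (m : 'I_k -> int)
  (t : 'I_l) (kt : nat) (p : nat) (M : 'M[R]_(n, p)) :
  complete_fan D -> unimodular_fan D ->
  tropical_cycle d C m ->
  compatible C D ->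
  pdim (D t) kt ->
  quotient_presentation (D t) M ->
  let e := (d - kt)%N in
  let lhsQ := recfan_cells (orbit_cells M C) in
  let lhsW := recfan_weights e (orbit_cells M C) (orbit_weights (D t) C m) in
  let rhsQ := orbit_cells M (recfan_cells C) in
  let rhsW := orbit_weights (D t) (recfan_cells C) (recfan_weights d C m) in
  cycle_eq e lhsQ lhsW rhsQ rhsW.
Proof.
move=> _ [_ unimD] [[_ [polyC _]] [pureC _]] _ dim_t [_ [kerM _]] e lhsQ lhsW rhsQ rhsW.
have [z absorb_z] : exists z, span_absorbing (D t) z.
  by have [B [S [_ [_ ->]]]] := unimD t; exact: gen_cone_span_absorbing.
exists 0%N, (fun=> set0); split; first by case.
move=> y _; apply: eq_bigr => i _.
rewrite /lhsQ /lhsW /rhsQ /rhsW /recfan_cells /orbit_cells /recfan_weights /orbit_weights.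
rewrite rec_cone_idem; have [poly_i nz_i] := polyC i.
case: (pselect (D t `<=` rec_cone (C i))) => [rec_i|not_rec_i]; last first.
  by rewrite (asboolF not_rec_i) !if_same.
rewrite (asboolT rec_i) (rec_cone_proj poly_i nz_i rec_i kerM absorb_z).
have [a dim_i] := pdim_exists (C i).
have [kt_le dim_proj] := pdim_proj kerM (Lsp_rec_cone nz_i rec_i) dim_i dim_t.
have a_le : (a <= d)%N by have [j [Cij dim_j]] := pureC i; exact: pdim_le Cij dim_i dim_j.
congr (if _ then _ else _); congr (if _ then _ else _); apply: asbool_equiv_eq.
rewrite (pdim_eq dim_proj) (pdim_eq dim_i) /e; lia.
Qed.
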